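(* Let $\lambda_{\max}>1$ and let $F:[0,\lambda_{\max}]\to\mathbb{R}_+$ be a continuously differentiable strictly concave function with $F(0)=0$, such that $F(x)<F^\star$ for all $x\in[0,1)$ and $F'(1)>0$. Suppose moreover that $F$ is thrice continuously differentiable on $(1,\lambda_{\max}]$, that $\lim_{x\to1^+}F''(x)<0$, and that $\sup_{x>1}|F^{(3)}(x)|\le M$ for some $M<\infty$. Then there exist $C_1,\varepsilon_0>0$ (depending on $F$) such that $q^\star(\varepsilon)\ge C_1/\sqrt{\varepsilon}$ for all $\varepsilon\in(0,\varepsilon_0]$.
   Context: A control policy is a function $\lambda:\mathbb{Z}_+\to[0,\lambda_{\max}]$; it defines a continuous-time birth–death chain on $\mathbb{Z}_+$ with rate $\lambda(q)$ from $q$ to $q+1$ and rate $1$ from $q$ to $q-1$ ($q\ge1$). Let $\mathcal S$ be the set of states reachable from $0$. The policy is stable if $\sum_{i\in\mathcal S}\prod_{q=0}^{i}\lambda(q)<\infty$ (positive recurrence on $\mathcal S$); then $\pi$ is its stationary distribution and $\bar q\sim\pi$. $F^\star=\sup\{\mathbb{E}_\alpha[F(X)]:\alpha$ a probability measure on $[0,\lambda_{\max}]$, $X\sim\alpha$, $\mathbb{E}_\alpha[X]\le1\}$; regret $R(\lambda)=F^\star-\mathbb{E}_\pi[F(\lambda(\bar q))]$; $q^\star(\varepsilon)=\inf\{\mathbb{E}_\pi[\bar q]:\lambda$ stable, $R(\lambda)\le\varepsilon\}$. *)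

From HB Require Import structures.
From mathcomp Require Import all_boot all_order all_algebra.
From mathcomp Require Import all_classical all_reals all_analysis.
Set Implicit Arguments. Unset Strict Implicit. Unset Printing Implicit Defensive.
Import Order.TTheory GRing.Theory Num.Theory.
Import numFieldNormedType.Exports.
Local Open Scope classical_set_scope.
Local Open Scope ring_scope.

Section Defs.
Variable R : realType.

Definition Icc0 (lmax : R) : set R := `[0, lmax]%classic.
Definition Ioc1 (lmax : R) : set R := `]1, lmax]%classic.

(* d is the derivative of f at x, relative to the set A (one-sided at
   boundary points of an interval A): the difference quotient tends to d
   as y -> x within A \ {x}. *)
Definition has_deriv_within (A : set R) (f : R -> R) (x d : R) : Prop :=
  (fun y => (f y - f x) / (y - x)) @ within (A `\ x) (nbhs x) --> d.

Definition strictly_concave_on (A : set R) (f : R -> R) : Prop :=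
  forall x y t, A x -> A y -> x != y -> 0 < t < 1 ->
    t * f x + (1 - t) * f y < f (t * x + (1 - t) * y).

(* F^* : sup of E_alpha[F(X)] over probability measures alpha on [0,lmax]
   (probability measures on R giving mass 1 to [0,lmax]) with E[X] <= 1 *)
Definition Fstar (lmax : R) (F : R -> R) : \bar R :=
  ereal_sup [set (\int[P]_(x in Icc0 lmax) (F x)%:E)%E
            | P in [set P : probability R R |
                      P (Icc0 lmax) = 1%E /\
                      (\int[P]_(x in Icc0 lmax) x%:E <= 1%:E)%E]].

Definition policy (lmax : R) (lam : nat -> R) : Prop :=
  forall q, 0 <= lam q <= lmax.

(* states reachable from 0 *)
Definition reach (lam : nat -> R) (i : nat) : bool :=
  all (fun q => 0 < lam q) (iota 0 i).

Definition stable (lam : nat -> R) : Prop :=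
  (\sum_(0 <= i <oo) (if reach lam i then \prod_(0 <= q < i.+1) lam q else 0)%:E
     < +oo)%E.

(* pi is a stationary distribution (pi Q = 0) of the birth-death chain with
   birth rates lam and death rate 1, supported on the reachable set *)
Definition stationary (lam : nat -> R) (pi : nat -> R) : Prop :=
  [/\ forall i, 0 <= pi i,
      (\sum_(0 <= i <oo) (pi i)%:E = 1%:E)%E,
      forall i, ~~ reach lam i -> pi i = 0 &
      forall i, pi i * (lam i + (if (0 < i)%N then 1 else 0)) =
                (if (0 < i)%N then pi i.-1 * lam i.-1 else 0) + pi i.+1].

Definition mean_queue (pi : nat -> R) : \bar R :=
  (\sum_(0 <= i <oo) (pi i * i%:R)%:E)%E.

Definition regret (lmax : R) (F : R -> R) (lam pi : nat -> R) : \bar R :=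
  (Fstar lmax F - \sum_(0 <= i <oo) (pi i * F (lam i))%:E)%E.

Definition qstar (lmax : R) (F : R -> R) (eps : R) : \bar R :=
  ereal_inf [set mean_queue pi | pi in
     [set pi | exists lam, [/\ policy lmax lam, stable lam, stationary lam pi &
                                (regret lmax F lam pi <= eps%:E)%E]]].
End Defs.

(* Strict concavity and F''(1+) < 0 give the quadratic upper bound
     F r <= F 1 + F'(1) (r - 1) - k (r - 1)_+^2   on [0, lmax].
   A stationary distribution of the birth-death chain satisfies
   pi_(i+1) = pi_i lam_i, so sum_i pi_i (lam_i - 1) telescopes to - pi_0.
   Since F* >= F 1 (take a Dirac mass at 1), regret at most eps forces
     F'(1) pi_0 + k sum_i pi_i (lam_i - 1)_+^2 <= eps.
   By AM-GM, lam - 1 <= sqrt eps / 2 + (lam - 1)_+^2 / (2 sqrt eps), and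
   telescoping once more bounds every pi_i by C sqrt eps.  A distribution on
   the integers whose atoms are all at most m has mean at least 1 / (16 m). *)

From HB Require Import structures.
From mathcomp Require Import all_boot all_order all_algebra.
From mathcomp Require Import all_classical all_reals all_analysis.
From mathcomp Require Import ring lra.
From mathcomp Require Import measurable_realfun.
Set Implicit Arguments.
Unset Strict Implicit.
Unset Printing Implicit Defensive.
Import Order.TTheory GRing.Theory Num.Theory.
Import numFieldNormedType.Exports.
Local Open Scope classical_set_scope.
Local Open Scope ring_scope.

Section DerivativeWithin.
Variable R : realType.
Implicit Types (A : set R) (f : R -> R).

Definition slope f (x y : R) : R := (f y - f x) / (y - x).

Lemma slopeC f x y : slope f x y = slope f y x.
Proof. by rewrite /slope -mulrNN -invrN !opprB. Qed.

Lemma slopeK f x y : x != y -> slope f x y * (y - x) = f y - f x.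
Proof. by move=> xy; rewrite divfK // subr_eq0 eq_sym. Qed.

Lemma within_cvgP A f x l :
  f @ within A (nbhs x) --> l <->
  forall e, 0 < e -> exists2 d, 0 < d &
    forall y, A y -> `|x - y| < d -> `|l - f y| < e.
Proof.
split.
- move/cvgrPdist_lt => cvg_l e e0.
  have /nbhs_ballP [d d0 ball_d] := cvg_l e e0.
  by exists d => // y Ay xy; apply: ball_d.
- move=> cvg_l; apply/cvgrPdist_lt => e e0.
  have [d d0 ball_d] := cvg_l e e0.
  apply/nbhs_ballP; exists d => //= y xy Ay; exact: ball_d.
Qed.

Lemma has_deriv_within_approx A f x d : has_deriv_within A f x d ->
  forall e, 0 < e -> exists2 del, 0 < del &
    forall y, A y -> y != x -> `|x - y| < del -> `|d - slope f x y| < e.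
Proof.
move/within_cvgP => cvg_l e e0; have [del del0 close] := cvg_l e e0.
exists del => // y Ay yx xy; apply: close => //; split => // /eqP; exact/negP.
Qed.

Lemma has_deriv_within_ge_right A f x d y b : has_deriv_within A f x d ->
  x < y -> (forall z, x < z < y -> A z /\ b <= slope f x z) -> b <= d.
Proof.
move=> f_deriv xy slopes; rewrite leNgt; apply/negP => db.
have [del del0 close] : exists2 del, 0 < del & forall z, A z -> z != x ->
    `|x - z| < del -> `|d - slope f x z| < b - d.
  by apply: has_deriv_within_approx f_deriv _ _; rewrite subr_gt0.
pose m := Num.min del (y - x).
have m0 : 0 < m by rewrite lt_min del0 subr_gt0.
have mdel : m <= del by rewrite ge_min lexx.
have my : m <= y - x by rewrite ge_min lexx orbT.
pose z := x + m / 2.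
have [Az bz] : A z /\ b <= slope f x z by apply: slopes; rewrite /z; apply/andP; split; lra.
have zx : z != x by rewrite gt_eqF // /z; lra.
have xz : `|x - z| < del by rewrite distrC ger0_norm /z; lra.
by have := close z Az zx xz; rewrite ltr_norml; lra.
Qed.

Lemma has_deriv_within_le_left A f x d y b : has_deriv_within A f x d ->
  y < x -> (forall z, y < z < x -> A z /\ slope f x z <= b) -> d <= b.
Proof.
move=> f_deriv yx slopes; rewrite leNgt; apply/negP => bd.
have [del del0 close] : exists2 del, 0 < del & forall z, A z -> z != x ->
    `|x - z| < del -> `|d - slope f x z| < d - b.
  by apply: has_deriv_within_approx f_deriv _ _; rewrite subr_gt0.
pose m := Num.min del (x - y).
have m0 : 0 < m by rewrite lt_min del0 subr_gt0.
have mdel : m <= del by rewrite ge_min lexx.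
have my : m <= x - y by rewrite ge_min lexx orbT.
pose z := x - m / 2.
have [Az bz] : A z /\ slope f x z <= b by apply: slopes; rewrite /z; apply/andP; split; lra.
have zx : z != x by rewrite lt_eqF // /z; lra.
have xz : `|x - z| < del by rewrite ger0_norm /z; lra.
by have := close z Az zx xz; rewrite ltr_norml; lra.
Qed.

Lemma has_deriv_within_continuous A f :
  (forall x, A x -> exists d, has_deriv_within A f x d) -> {within A, continuous f}.
Proof.
move=> f_deriv; apply/subspace_continuousP => x Ax.
have [d fx_deriv] := f_deriv x Ax.
apply/within_cvgP => e e0.
have [del del0 close] := has_deriv_within_approx fx_deriv ltr01.
have d1 : 0 < `|d| + 1 by rewrite ltr_wpDl.
exists (Num.min del (e / (`|d| + 1))); first by rewrite lt_min del0 divr_gt0.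
move=> y Ay; rewrite lt_min => /andP[xy1 xy2].
have [->|yx] := eqVneq y x; first by rewrite subrr normr0.
have slope_le : `|slope f x y| <= `|d| + 1.
  rewrite -[slope f x y](subrK d) (le_trans (ler_normD _ _)) //.
  by rewrite addrC lerD2l distrC ltW // close.
rewrite -opprB -slopeK 1?eq_sym // normrN normrM distrC.
rewrite (le_lt_trans (ler_wpM2r (normr_ge0 _) slope_le)) //.
by rewrite -ltr_pdivlMl // mulrC.
Qed.

Lemma is_derive_has_deriv_within A f x d rho : 0 < rho ->
  (forall y, `|x - y| < rho -> A y) -> has_deriv_within A f x d ->
  is_derive x 1 f d.
Proof.
move=> rho0 ball_in_A f_deriv.
have quotient_cvg : (fun h => h^-1 *: ((f \o shift x) (h *: 1) - f x)) @ 0^' --> d.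
  apply/within_cvgP => e e0.
  have [del del0 close] := has_deriv_within_approx f_deriv e0.
  exists (Num.min del rho); first by rewrite lt_min del0 rho0.
  move=> h /= h0; rewrite sub0r normrN lt_min => /andP[h1 h2].
  have xh : x - (h + x) = - h by rewrite opprD addrCA subrr addr0.
  have hx_neq : h + x != x by rewrite -subr_eq0 addrK.
  have := close (h + x) (ball_in_A _ _) hx_neq; rewrite xh normrN /slope addrK => /(_ h2 h1).
  by rewrite /GRing.scale /= mulr1 mulrC.
apply: DeriveDef; first exact: (cvgP _ quotient_cvg).
exact: (cvg_lim _ quotient_cvg).
Qed.
End DerivativeWithin.

Section ConcaveOnInterval.
Variables (R : realType) (lmax : R) (f f' : R -> R).
Hypothesis f_concave : strictly_concave_on (Icc0 lmax) f.

Lemma Icc0E x : Icc0 lmax x = (0 <= x <= lmax).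
Proof. by rewrite /Icc0 /= in_itv. Qed.

Lemma concave_three_points a b c : 0 <= a -> a < b -> b < c -> c <= lmax ->
  (c - b) * f a + (b - a) * f c <= (c - a) * f b.
Proof.
move=> a0 ab bc cl.
have ca : 0 < c - a by rewrite subr_gt0 (lt_trans ab bc).
have Aa : Icc0 lmax a by rewrite Icc0E a0 /=; lra.
have Ac : Icc0 lmax c by rewrite Icc0E cl andbT; lra.
have ac : a != c by rewrite lt_eqF // (lt_trans ab bc).
set t := (c - b) / (c - a).
have t01 : 0 < t < 1.
  apply/andP; split; first by apply: divr_gt0; rewrite // subr_gt0.
  by rewrite /t ltr_pdivrMr // mul1r; lra.
have := f_concave Aa Ac ac t01.
have -> : t * a + (1 - t) * c = b by rewrite /t; field; rewrite gt_eqF.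
have -> : (c - b) * f a + (b - a) * f c = (c - a) * (t * f a + (1 - t) * f c).
  by rewrite /t; field; rewrite gt_eqF.
by move/ltW; rewrite -(ler_pM2l ca).
Qed.

Lemma concave_slope_left a b c : 0 <= a -> a < b -> b < c -> c <= lmax ->
  slope f a c <= slope f a b.
Proof.
move=> a0 ab bc cl; have := concave_three_points a0 ab bc cl.
rewrite /slope ler_pdivrMr ?subr_gt0 ?(lt_trans ab bc) // mulrAC.
by rewrite ler_pdivlMr ?subr_gt0 //; lra.
Qed.

Lemma concave_slope_right a b c : 0 <= a -> a < b -> b < c -> c <= lmax ->
  slope f b c <= slope f a c.
Proof.
move=> a0 ab bc cl; have := concave_three_points a0 ab bc cl.
rewrite /slope ler_pdivrMr ?subr_gt0 // mulrAC.
by rewrite ler_pdivlMr ?subr_gt0 ?(lt_trans ab bc) //; lra.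
Qed.

Lemma concave_chord_le x del r a K : 0 <= x -> 0 < del -> x + del < r -> r <= lmax ->
  f (x + del) <= f x + a * del - K * del ^+ 2 ->
  f r <= f x + a * (r - x) - K * del * (r - x).
Proof.
move=> x0 del0 dr rl f_del.
have xdel : x < x + del by rewrite ltrDl.
have rx : 0 < r - x by lra.
have xr : x != r by rewrite lt_eqF //; lra.
have slope_del : slope f x (x + del) <= a - K * del.
  by rewrite /slope addrAC subrr add0r ler_pdivrMr //; lra.
have := le_trans (concave_slope_left x0 xdel dr rl) slope_del.
by move=> /(ler_wpM2r (ltW rx)); rewrite slopeK //; lra.
Qed.

Hypothesis f'_deriv : forall x, 0 <= x <= lmax -> has_deriv_within (Icc0 lmax) f x (f' x).

Lemma concave_tangent c y : 0 <= c <= lmax -> 0 <= y <= lmax ->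
  f y <= f c + f' c * (y - c).
Proof.
move=> cI /andP[y0 yl]; have /andP[c0 cl] := cI.
have [yc|cy|->] := ltgtP y c; last by rewrite subrr mulr0 addr0.
- have : f' c <= slope f y c.
    apply: has_deriv_within_le_left (f'_deriv cI) yc _ => z /andP[yz zc].
    split; first by rewrite Icc0E; apply/andP; split; lra.
    by rewrite slopeC; apply: concave_slope_right.
  have cy_ge0 : 0 <= c - y by lra.
  by move=> /(ler_wpM2r cy_ge0); rewrite slopeK ?lt_eqF //; lra.
- have : slope f c y <= f' c.
    apply: has_deriv_within_ge_right (f'_deriv cI) cy _ => z /andP[cz zy].
    split; first by rewrite Icc0E; apply/andP; split; lra.
    exact: concave_slope_left.
  have yc_ge0 : 0 <= y - c by lra.
  by move=> /(ler_wpM2r yc_ge0); rewrite slopeK ?lt_eqF //; lra.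
Qed.

Lemma concave_midpoint_le x s : 0 <= x -> 0 <= s -> x + s <= lmax ->
  f (x + s) <= f x + (f' x + f' (x + s / 2)) * (s / 2).
Proof.
move=> x0 s0 xs.
have xI : 0 <= x <= lmax by apply/andP; split; lra.
have mI : 0 <= x + s / 2 <= lmax by apply/andP; split; lra.
have sI : 0 <= x + s <= lmax by apply/andP; split; lra.
have := concave_tangent mI sI; have := concave_tangent xI mI.
have -> : x + s - (x + s / 2) = s / 2 by field.
have -> : x + s / 2 - x = s / 2 by field.
lra.
Qed.
End ConcaveOnInterval.

Definition sq_excess {R : realDomainType} (r : R) : R :=
  if r <= 1 then 0 else (r - 1) ^+ 2.

Lemma sq_excess_ge0 {R : realDomainType} (r : R) : 0 <= sq_excess r.
Proof. by rewrite /sq_excess; case: ifP => _; rewrite ?sqr_ge0. Qed.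

Section QuadraticDrop.
Variables (R : realType) (lmax L : R) (F F1 F2 : R -> R).
Hypotheses (lmax_gt1 : 1 < lmax) (F_concave : strictly_concave_on (Icc0 lmax) F).
Hypothesis F1_deriv : forall x, 0 <= x <= lmax -> has_deriv_within (Icc0 lmax) F x (F1 x).
Hypothesis F1_cont : {within Icc0 lmax, continuous F1}.
Hypothesis F2_deriv : forall x, 1 < x <= lmax -> has_deriv_within (Ioc1 lmax) F1 x (F2 x).
Hypotheses (F2_lim : F2 x @[x --> 1^'+] --> L) (L_lt0 : L < 0).

Lemma deriv_drop_right : exists2 del, 0 < del <= lmax - 1 &
  forall c, 1 < c <= 1 + del -> F1 c <= F1 1 + L / 2 * (c - 1).
Proof.
have [d0 d00 F2_small] : exists2 d0, 0 < d0 &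
    forall y, 1 < y -> `|1 - y| < d0 -> F2 y < L / 2.
  have /within_cvgP F2_near := F2_lim.
  have [|d0 d00 close] := F2_near (- L / 2); first by rewrite divr_gt0 // oppr_gt0.
  by exists d0 => // y y1 yd; have := close y y1 yd; rewrite ltr_norml => /andP[]; lra.
pose del := Num.min (d0 / 2) (lmax - 1).
have del_d0 : del <= d0 / 2 by rewrite /del ge_min lexx.
have del_lmax : del <= lmax - 1 by rewrite /del ge_min lexx orbT.
have del0 : 0 < del by rewrite /del lt_min divr_gt0 // subr_gt0.
exists del; first by rewrite del0 del_lmax.
move=> c /andP[c1 cd].
have [xi] : exists2 xi, xi \in `]1, c[ & F1 c - F1 1 = F2 xi * (c - 1).
  apply: MVT => // [x|].
    rewrite in_itv /= => /andP[x1 xc].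
    apply: (@is_derive_has_deriv_within _ (Ioc1 lmax) _ _ _ (Num.min (x - 1) (lmax - x))).
    - by rewrite lt_min; apply/andP; split; lra.
    - move=> y; rewrite lt_min !ltr_norml => /andP[/andP[h1 h1'] /andP[h2 h2']].
      by rewrite /Ioc1 /= in_itv /=; apply/andP; split; lra.
    - by apply: F2_deriv; apply/andP; split; lra.
  apply: continuous_subspaceW F1_cont => y /=; rewrite in_itv /= => /andP[h1 h2].
  by rewrite Icc0E; apply/andP; split; lra.
rewrite in_itv /= => /andP[xi1 xic] mvt.
have : F2 xi < L / 2 by apply: F2_small; rewrite // ltr_norml; apply/andP; split; lra.
have c1_ge0 : 0 <= c - 1 by lra.
by move=> /ltW /(ler_wpM2r c1_ge0); lra.
Qed.

Lemma value_drop_right : exists2 del, 0 < del <= lmax - 1 &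
  forall s, 0 < s <= del -> F (1 + s) <= F 1 + F1 1 * s + L / 8 * s ^+ 2.
Proof.
have [del /andP[del0 del_lmax] F1_drop] := deriv_drop_right.
exists del; first by rewrite del0 del_lmax.
move=> s /andP[s0 sd].
have s_lmax : 1 + s <= lmax by lra.
have mid := concave_midpoint_le F_concave F1_deriv ler01 (ltW s0) s_lmax.
have s2 : 0 <= s / 2 by lra.
have /(ler_wpM2r s2) drop : F1 (1 + s / 2) <= F1 1 + L / 2 * (1 + s / 2 - 1).
  by apply: F1_drop; apply/andP; split; lra.
have -> : L / 8 * s ^+ 2 = L / 2 * (1 + s / 2 - 1) * (s / 2) by field.
lra.
Qed.

Lemma concave_quadratic_bound : exists2 k, 0 < k &
  forall r, 0 <= r <= lmax -> F r <= F 1 + F1 1 * (r - 1) - k * sq_excess r.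
Proof.
have [del /andP[del0 del_lmax] F_drop] := value_drop_right.
pose K := - L / 8.
have K0 : 0 < K by rewrite /K divr_gt0 // oppr_gt0.
have l1 : 0 < lmax - 1 by rewrite subr_gt0.
pose k := K * del / (lmax - 1).
have k0 : 0 < k by rewrite /k divr_gt0 // mulr_gt0.
have kK : k <= K by rewrite /k ler_pdivrMr // ler_pM2l.
exists k => // r rI; have /andP[r0 rl] := rI.
rewrite /sq_excess; case: ifPn => [r1|]; last rewrite -ltNge => r1.
  have one_I : 0 <= (1 : R) <= lmax by rewrite ler01 ltW.
  by rewrite mulr0 subr0; exact: (concave_tangent F_concave F1_deriv one_I rI).
have r1_gt0 : 0 < r - 1 by rewrite subr_gt0.
have [rd|rd] := lerP r (1 + del).
  have : F r <= F 1 + F1 1 * (r - 1) + L / 8 * (r - 1) ^+ 2.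
    by rewrite -{1}(subrK 1 r) addrC; apply: F_drop; rewrite r1_gt0 lerBlDl.
  have : k * (r - 1) ^+ 2 <= K * (r - 1) ^+ 2 by rewrite ler_pM2r // exprn_gt0.
  by rewrite /K; lra.
have drop_del : F (1 + del) <= F 1 + F1 1 * del - K * del ^+ 2.
  by have := F_drop del; rewrite del0 lexx /K => /(_ isT); lra.
have := concave_chord_le F_concave ler01 del0 rd rl drop_del.
have : k * (r - 1) <= K * del.
  by rewrite /k mulrAC ler_pdivrMr // ler_pM2l ?(mulr_gt0 K0 del0) //; lra.
move=> /(ler_wpM2r (ltW r1_gt0)).
by rewrite /K; lra.
Qed.
End QuadraticDrop.

Section NonnegSeries.
Variable R : realType.
Implicit Types (u : nat -> R) (b : R).

Lemma psum_le_nneseries u N : (forall i, 0 <= u i) ->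
  ((\sum_(0 <= i < N) u i)%:E <= \sum_(0 <= i <oo) (u i)%:E)%E.
Proof.
by move=> u0; rewrite -sumEFin; apply: nneseries_lim_ge => n _ _; rewrite lee_fin.
Qed.

Lemma nneseries_le u b : (forall i, 0 <= u i) ->
  (forall N, \sum_(0 <= i < N) u i <= b) ->
  (\sum_(0 <= i <oo) (u i)%:E <= b%:E)%E.
Proof.
move=> u0 ub.
have u0E n (_ : (0 <= n)%N) (_ : xpredT n) : (0 <= (u n)%:E)%E by rewrite lee_fin.
rewrite (cvg_lim _ (ereal_nondecreasing_cvgn (ereal_nondecreasing_series u0E))) //.
by apply: ge_ereal_sup => _ [n _ <-]; rewrite /= sumEFin lee_fin.
Qed.

Lemma nneseries_gt_psum u b : (forall i, 0 <= u i) ->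
  (b%:E < \sum_(0 <= i <oo) (u i)%:E)%E -> exists N, b < \sum_(0 <= i < N) u i.
Proof.
move=> u0 ub; apply: contrapT => small.
have : (\sum_(0 <= i <oo) (u i)%:E <= b%:E)%E.
  by apply: nneseries_le => // N; rewrite leNgt; apply/negP => bN; apply: small; exists N.
by rewrite leNgt ub.
Qed.

Lemma nneseries1_term_small u : (forall i, 0 <= u i) ->
  (\sum_(0 <= i <oo) (u i)%:E = 1%:E)%E ->
  forall t, 0 < t -> exists N0, forall N, (N0 <= N)%N -> u N <= t.
Proof.
move=> u0 u1 t t0.
have [|N0 N0t] := nneseries_gt_psum u0 (b := 1 - t); first by rewrite u1 lte_fin gtrBl.
exists N0 => N N0N.
have : \sum_(0 <= i < N.+1) u i <= 1 by rewrite -lee_fin -u1 psum_le_nneseries.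
have mono : \sum_(0 <= i < N0) u i <= \sum_(0 <= i < N) u i.
  exact: (nondecreasing_series (fun n _ _ => u0 n)).
rewrite big_nat_recr //=; lra.
Qed.
End NonnegSeries.

Section Stationary.
Variables (R : realType) (lam pi : nat -> R).
Hypothesis pi_stat : stationary lam pi.

Lemma stationary_ge0 i : 0 <= pi i.
Proof. by case: pi_stat. Qed.

Lemma stationary_sum1 : (\sum_(0 <= i <oo) (pi i)%:E = 1%:E)%E.
Proof. by case: pi_stat. Qed.

Lemma stationary_psum_le1 N : \sum_(0 <= i < N) pi i <= 1.
Proof.
by rewrite -lee_fin -stationary_sum1 psum_le_nneseries // => i; exact: stationary_ge0.
Qed.

Lemma stationary_succ i : pi i.+1 = pi i * lam i.
Proof.
case: pi_stat => _ _ _ balance; elim: i => [|i IH].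
  by have := balance 0%N; rewrite /= addr0 add0r.
have := balance i.+1; rewrite /= -IH mulrDr mulr1 => /eqP.
by rewrite eq_sym addrC -subr_eq addrK => /eqP.
Qed.

Lemma stationary_telescope N :
  pi N - pi 0%N = \sum_(0 <= i < N) pi i * (lam i - 1).
Proof.
rewrite -telescope_sumr //; apply: eq_bigr => i _.
by rewrite stationary_succ mulrBr mulr1.
Qed.
End Stationary.

Section RegretBound.
Variables (R : realType) (lmax : R) (F : R -> R) (lam pi : nat -> R).
Hypotheses (lam_policy : policy lmax lam) (pi_stat : stationary lam pi).

Lemma reward_psum_le a k :
  (forall r, 0 <= r <= lmax -> F r <= F 1 + a * (r - 1) - k * sq_excess r) ->
  forall N, \sum_(0 <= i < N) pi i * F (lam i) <=
    F 1 * \sum_(0 <= i < N) pi i + a * (pi N - pi 0%N)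
      - k * \sum_(0 <= i < N) pi i * sq_excess (lam i).
Proof.
move=> F_le N; rewrite (stationary_telescope pi_stat) !mulr_sumr -big_split -sumrB /=.
apply: ler_sum => i _.
rewrite [leRHS](_ : _ = pi i * (F 1 + a * (lam i - 1) - k * sq_excess (lam i))).
  exact: (ler_wpM2l (stationary_ge0 pi_stat i) (F_le _ (lam_policy i))).
by ring.
Qed.

Lemma reward_term_ge0 : (forall r, 0 <= r <= lmax -> 0 <= F r) ->
  forall i, 0 <= pi i * F (lam i).
Proof. by move=> F0 i; rewrite mulr_ge0 ?(stationary_ge0 pi_stat) ?F0 ?lam_policy. Qed.

Lemma regret_reward_ge eps :
  (forall r, 0 <= r <= lmax -> 0 <= F r) -> ((F 1)%:E <= Fstar lmax F)%E ->
  (regret lmax F lam pi <= eps%:E)%E ->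
  ((F 1 - eps)%:E <= \sum_(0 <= i <oo) (pi i * F (lam i))%:E)%E.
Proof.
move=> F0 F1_le; rewrite /regret.
have : (0 <= \sum_(0 <= i <oo) (pi i * F (lam i))%:E)%E.
  by apply: nneseries_ge0 => i _ _; rewrite lee_fin reward_term_ge0.
case: (\sum_(0 <= i <oo) _)%E => [g| |] // _; last by rewrite leey.
move=> /(le_trans (leeB F1_le (lexx g%:E))); rewrite -EFinB !lee_fin; lra.
Qed.

Lemma regret_penalty_le a k eps :
  0 < a -> 0 <= k -> 0 <= F 1 ->
  (forall r, 0 <= r <= lmax -> F r <= F 1 + a * (r - 1) - k * sq_excess r) ->
  (forall r, 0 <= r <= lmax -> 0 <= F r) -> ((F 1)%:E <= Fstar lmax F)%E ->
  (regret lmax F lam pi <= eps%:E)%E ->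
  forall M, a * pi 0%N + k * \sum_(0 <= i < M) pi i * sq_excess (lam i) <= eps.
Proof.
move=> a0 k0 F1_ge0 F_le F0 F1_le reg M.
pose G N := \sum_(0 <= i < N) pi i * F (lam i).
pose S N := \sum_(0 <= i < N) pi i * sq_excess (lam i).
have G0 := reward_term_ge0 F0.
have S0 i : 0 <= pi i * sq_excess (lam i).
  by rewrite mulr_ge0 ?sq_excess_ge0 ?(stationary_ge0 pi_stat).
apply/ler_addgt0Pr => e e0.
pose t := e / (1 + a).
have t0 : 0 < t by rewrite divr_gt0 // ltr_wpDr // ltW.
have et : t * (1 + a) = e by rewrite divfK // gt_eqF // ltr_wpDr // ltW.
have [N0 pi_small] :=
  nneseries1_term_small (stationary_ge0 pi_stat) (stationary_sum1 pi_stat) t0.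
have [|N1 G_N1] := nneseries_gt_psum G0 (b := F 1 - eps - t).
  by apply: lt_le_trans (regret_reward_ge F0 F1_le reg); rewrite lte_fin; lra.
pose N := maxn M (maxn N0 N1).
have G_mono : G N1 <= G N.
  by apply: (nondecreasing_series (fun n _ _ => G0 n)); rewrite !leq_max leqnn !orbT.
have S_mono : S M <= S N.
  by apply: (nondecreasing_series (fun n _ _ => S0 n)); rewrite leq_max leqnn.
have piN : pi N <= t by apply: pi_small; rewrite !leq_max leqnn !orbT.
have reward_N := reward_psum_le F_le N.
rewrite -/(G N) -/(S N) in reward_N; rewrite -/(G N1) in G_N1; rewrite -/(S M).
have := ler_wpM2l F1_ge0 (stationary_psum_le1 pi_stat N).
have := ler_wpM2l (ltW a0) piN; have := ler_wpM2l k0 S_mono.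
lra.
Qed.
End RegretBound.

Lemma sub1_le_sq_excess {R : realFieldType} (s r : R) : 0 < s ->
  r - 1 <= s / 2 + sq_excess r / (2 * s).
Proof.
move=> s0; rewrite /sq_excess; case: ifPn => [r1|_].
  rewrite mul0r addr0; have : 0 < s / 2 by rewrite divr_gt0.
  lra.
rewrite -subr_ge0 (_ : _ - _ = (r - 1 - s) ^+ 2 / (2 * s)).
  by rewrite divr_ge0 ?sqr_ge0 // ltW // mulr_gt0.
by field; rewrite gt_eqF.
Qed.

Lemma stationary_le_sqrt (R : realType) (lam pi : nat -> R) a k eps :
  stationary lam pi -> 0 < a -> 0 < k -> 0 < eps -> eps <= 1 ->
  (forall M, a * pi 0%N + k * \sum_(0 <= i < M) pi i * sq_excess (lam i) <= eps) ->
  forall i, pi i <= Num.sqrt eps * (1 / a + (1 + 1 / k) / 2).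
Proof.
move=> pi_stat a0 k0 eps0 eps1 penalty i.
pose s := Num.sqrt eps.
have s0 : 0 < s by rewrite sqrtr_gt0.
have ss : s ^+ 2 = eps by rewrite sqr_sqrtr // ltW.
have s1 : s <= 1 by rewrite -sqrtr1 ler_sqrt.
pose S := \sum_(0 <= j < i) pi j * sq_excess (lam j).
have S0 : 0 <= S.
  by apply: sumr_ge0 => j _; rewrite mulr_ge0 ?sq_excess_ge0 ?(stationary_ge0 pi_stat).
have pi00 := stationary_ge0 pi_stat 0.
have penalty_i : a * pi 0%N + k * S <= s ^+ 2 by rewrite ss penalty.
have growth : pi i - pi 0%N <= s / 2 * \sum_(0 <= j < i) pi j + S / (2 * s).
  rewrite (stationary_telescope pi_stat) /S mulr_sumr mulr_suml -big_split /=.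
  apply: ler_sum => j _.
  rewrite [leRHS](_ : _ = pi j * (s / 2 + sq_excess (lam j) / (2 * s))); last by ring.
  exact: (ler_wpM2l (stationary_ge0 pi_stat j) (sub1_le_sq_excess _ s0)).
have mass : s / 2 * \sum_(0 <= j < i) pi j <= s / 2.
  rewrite -[leRHS]mulr1; apply: ler_wpM2l; first by rewrite divr_ge0 // ltW.
  exact: (stationary_psum_le1 pi_stat).
have pi0_le : pi 0%N <= s / a.
  by rewrite ler_pdivlMr //; have := ler_wpM2l (ltW s0) s1; nra.
have S_le : S / (2 * s) <= s / (2 * k).
  by rewrite ler_pdivrMr ?mulr_gt0 // mulrAC ler_pdivlMr ?mulr_gt0 //; nra.
rewrite -/s (_ : s * _ = s / a + s / 2 + s / (2 * k)); first lra.
by field; rewrite !gt_eqF.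
Qed.

Lemma mean_queue_ge (R : realType) (pi : nat -> R) m :
  0 < m -> m <= 1 / 8 -> (forall i, 0 <= pi i) ->
  (\sum_(0 <= i <oo) (pi i)%:E = 1%:E)%E -> (forall i, pi i <= m) ->
  ((1 / (16 * m))%:E <= mean_queue pi)%E.
Proof.
move=> m0 m8 pi0 pi1 pim.
(* At most a quarter of the mass lies below N := floor (1 / (4 m)) >= 1 / (8 m),
   so at least half of it lies in [N, N') once N' captures three quarters. *)
pose x := 1 / (4 * m).
have x2 : 2 <= x by rewrite /x ler_pdivlMr ?mulr_gt0 //; lra.
pose N := Num.trunc x.
have /andP[Nx xN] := truncn_itv (le_trans (ler0n _ 2) x2).
have [|N2 N2_mass] := nneseries_gt_psum pi0 (b := 3 / 4); first by rewrite pi1 lte_fin; lra.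
pose N' := maxn N N2.
have NN' : (N <= N')%N by rewrite leq_maxl.
have head_mass : \sum_(0 <= i < N) pi i <= 1 / 4.
  apply: le_trans (ler_sum _ (fun i _ => pim i)) _.
  rewrite sumr_const_nat subn0 -(mulr_natl m) (le_trans (ler_wpM2r (ltW m0) Nx)) //.
  by rewrite (_ : x * m = 1 / 4) // /x; field; rewrite gt_eqF.
have total_mass : 3 / 4 < \sum_(0 <= i < N') pi i.
  apply: lt_le_trans N2_mass _.
  by apply: (nondecreasing_series (fun n _ _ => pi0 n)); rewrite leq_maxr.
have tail_mass : 1 / 2 <= \sum_(N <= i < N') pi i.
  by move: total_mass; rewrite (big_cat_nat (leq0n N) NN') /=; lra.
have N_ge : 1 / (8 * m) <= N%:R.
  suff -> : 1 / (8 * m) = x / 2 by move: xN; rewrite -natr1; lra.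
  by rewrite /x; field; rewrite gt_eqF.
have tail_mean : N%:R * \sum_(N <= i < N') pi i <= \sum_(N <= i < N') pi i * i%:R.
  rewrite mulr_sumr; apply: ler_sum_nat => i /andP[Ni _].
  by rewrite mulrC ler_wpM2l // ler_nat.
rewrite /mean_queue; apply: le_trans (psum_le_nneseries N' _); last first.
  by move=> i; rewrite mulr_ge0.
rewrite lee_fin (big_cat_nat (leq0n N) NN') /=.
rewrite -[leLHS]addr0 addrC lerD ?sumr_ge0 // => [|i _]; last by rewrite mulr_ge0.
apply: le_trans tail_mean; rewrite (_ : 1 / (16 * m) = 1 / (8 * m) * (1 / 2)).
  by apply: ler_pM => //; rewrite divr_ge0 // mulr_ge0 // ltW.
by field; rewrite gt_eqF.
Qed.

Lemma Fstar_ge (R : realType) (lmax : R) (F : R -> R) x :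
  0 <= x <= lmax -> x <= 1 -> {within Icc0 lmax, continuous F} ->
  ((F x)%:E <= Fstar lmax F)%E.
Proof.
move=> xI x1 F_cont.
have mI : measurable (Icc0 lmax) by exact: measurable_itv.
have mF : measurable_fun (Icc0 lmax) (fun y => (F y)%:E).
  by apply/measurable_EFinP; exact: subspace_continuous_measurable_fun.
have dirac_in : \d_x (Icc0 lmax) = 1%E :> \bar R.
  by rewrite /dirac indicE mem_set // Icc0E.
apply: ereal_sup_ubound; exists (\d_x : probability R R).
  split => //.
  by rewrite integral_dirac // dirac_in mul1e lee_fin.
by rewrite integral_dirac // dirac_in mul1e.
Qed.

Theorem proposition6p1 (R : realType) (lmax : R) (F F1 F2 F3 : R -> R) (M L : R) :
  1 < lmax ->
  (* F : [0,lmax] -> R_+ , continuously differentiable with derivative F1 *)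
  (forall x, 0 <= x <= lmax -> 0 <= F x) ->
  (forall x, 0 <= x <= lmax -> has_deriv_within (Icc0 lmax) F x (F1 x)) ->
  {within (Icc0 lmax), continuous F1} ->
  strictly_concave_on (Icc0 lmax) F ->
  F 0 = 0 ->
  (forall x, 0 <= x < 1 -> ((F x)%:E < Fstar lmax F)%E) ->
  0 < F1 1 ->
  (* F thrice continuously differentiable on (1, lmax] *)
  (forall x, 1 < x <= lmax -> has_deriv_within (Ioc1 lmax) F1 x (F2 x)) ->
  (forall x, 1 < x <= lmax -> has_deriv_within (Ioc1 lmax) F2 x (F3 x)) ->
  {within (Ioc1 lmax), continuous F3} ->
  (* lim_{x -> 1+} F''(x) = L < 0 *)
  F2 x @[x --> 1^'+] --> L -> L < 0 ->
  (* sup_{x > 1} |F'''(x)| <= M *)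
  (forall x, 1 < x <= lmax -> `|F3 x| <= M) ->
  exists C1 eps0 : R, [/\ 0 < C1, 0 < eps0 &
    forall eps, 0 < eps <= eps0 ->
      ((C1 / Num.sqrt eps)%:E <= qstar lmax F eps)%E].
Proof.
move=> lmax_gt1 F_ge0 F1_deriv F1_cont F_concave _ _ a0 F2_deriv _ _ F2_lim L0 _.
have [k k0 F_le] := concave_quadratic_bound lmax_gt1 F_concave F1_deriv F1_cont F2_deriv F2_lim L0.
have oneI : 0 <= (1 : R) <= lmax by rewrite ler01 ltW.
have F_cont : {within Icc0 lmax, continuous F}.
  by apply: has_deriv_within_continuous => x; rewrite Icc0E => /F1_deriv; exists (F1 x).
have F1_le := Fstar_ge oneI (lexx 1) F_cont.
pose D := 1 / F1 1 + (1 + 1 / k) / 2.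
have D0 : 0 < D by rewrite /D addr_gt0 ?divr_gt0 ?addr_gt0 ?divr_gt0.
exists (1 / (16 * D)), (Num.min 1 ((1 / (8 * D)) ^+ 2)); split.
- by rewrite divr_gt0 ?mulr_gt0.
- by rewrite lt_min ltr01 exprn_gt0 // divr_gt0 ?mulr_gt0.
move=> eps /andP[eps0]; rewrite le_min => /andP[eps1 eps_small].
apply: le_ereal_inf_tmp => _ [pi [lam [lam_policy _ pi_stat reg]] <-].
have penalty := regret_penalty_le lam_policy pi_stat a0 (ltW k0) (F_ge0 _ oneI) F_le F_ge0 F1_le reg.
have pi_le := stationary_le_sqrt pi_stat a0 k0 eps0 eps1 penalty.
have c0 : 0 < 1 / (8 * D) by rewrite divr_gt0 ?mulr_gt0.
have sqrt_le : Num.sqrt eps <= 1 / (8 * D).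
  by rewrite -[leRHS](ger0_norm (ltW c0)) -sqrtr_sqr ler_sqrt // sqr_ge0.
have sqrt_small : Num.sqrt eps * D <= 1 / 8.
  have -> : 1 / 8 = 1 / (8 * D) * D by field; rewrite gt_eqF.
  exact: (ler_wpM2r (ltW D0) sqrt_le).
have m0 : 0 < Num.sqrt eps * D by rewrite mulr_gt0 // sqrtr_gt0.
have := mean_queue_ge m0 sqrt_small (stationary_ge0 pi_stat) (stationary_sum1 pi_stat) pi_le.
rewrite (_ : 1 / (16 * (Num.sqrt eps * D)) = 1 / (16 * D) / Num.sqrt eps) //.
by field; rewrite !gt_eqF ?sqrtr_gt0.
Qed.
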